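(* Let $\gamma$ be a gauge on $\mathbb{R}^d$ with skewness $\sigma$ and let $v\in\mathrm{SD}_\gamma$. Let $A\subset\mathbb{R}^d$ be finite with positive weights $w_a$ satisfying $\sum_{a\in A}w_a=1$, let $C\subseteq A$ with $w_C=\sum_{c\in C}w_c>\frac{1}{1+\sigma}$, put $D=A\setminus C$, and let $U\subset\mathbb{R}^d$ be bounded. For $M>0$ let $f_M(x)=\sum_{d\in D}w_d\gamma(x-d)+\sum_{c\in C}w_c\gamma(x-(c-Mv))$ (the Fermat–Weber objective after replacing each $c\in C$ by $c-Mv$, weights unchanged). Then there is $M_0>0$ such that for all $M>M_0$ no minimizer of $f_M$ lies in $U$.
   Context: A gauge $\gamma$ on $\mathbb{R}^d$ is the Minkowski functional of a convex compact set $B_\gamma$ with the origin in its interior (not necessarily symmetric). Its skewness is $\sigma=\sup_{x\neq0}\gamma(x)/\gamma(-x)$ and $\mathrm{SD}_\gamma=\{v:\gamma(v)=\sigma\gamma(-v)=1\}$ (nonempty). *)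

From HB Require Import structures.
From mathcomp Require Import all_boot all_order all_algebra.
From mathcomp Require Import all_classical all_reals all_analysis.
Set Implicit Arguments. Unset Strict Implicit. Unset Printing Implicit Defensive.
Import Order.TTheory GRing.Theory Num.Theory.
Import numFieldNormedType.Exports.
Local Open Scope classical_set_scope.
Local Open Scope ring_scope.

Definition convex_body {R : realType} {d : nat} (B : set 'rV[R]_d) : Prop :=
  forall x y (t : R), B x -> B y -> 0 <= t <= 1 -> B (t *: x + (1 - t) *: y).

Definition gauge_body {R : realType} {d : nat} (B : set 'rV[R]_d) : Prop :=
  [/\ convex_body B, compact B & (interior B) 0].

Definition gauge_fun {R : realType} {d : nat} (B : set 'rV[R]_d)
  (x : 'rV[R]_d) : R :=
  inf [set t : R | 0 < t /\ exists2 b, B b & x = t *: b].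

Definition skewness {R : realType} {d : nat} (gamma : 'rV[R]_d -> R) : R :=
  sup [set gamma x / gamma (- x) | x in [set x : 'rV[R]_d | x != 0]].

Definition SD {R : realType} {d : nat} (gamma : 'rV[R]_d -> R) : set 'rV[R]_d :=
  [set v | gamma v = 1 /\ skewness gamma * gamma (- v) = 1].

(* Fermat--Weber objective after moving each point of C by -M v. The point set
   A = {a i | i : 'I_n} (a injective), C = {a i | i \in C}, D = A \ C. *)
Definition fM {R : realType} {d n : nat} (gamma : 'rV[R]_d -> R)
  (a : 'I_n -> 'rV[R]_d) (w : 'I_n -> R) (C : {set 'I_n})
  (v : 'rV[R]_d) (M : R) (x : 'rV[R]_d) : R :=
  \sum_(i < n | i \notin C) w i * gamma (x - a i)
  + \sum_(i < n | i \in C) w i * gamma (x - (a i - M *: v)).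

From HB Require Import structures.
From mathcomp Require Import all_boot all_order all_algebra.
From mathcomp Require Import all_classical all_reals all_analysis.
From mathcomp Require Import ring lra.
Set Implicit Arguments. Unset Strict Implicit. Unset Printing Implicit Defensive.
Import Order.TTheory GRing.Theory Num.Theory.
Import numFieldNormedType.Exports.
Local Open Scope classical_set_scope.
Local Open Scope ring_scope.

(* Write g for the gauge, sigma for its skewness, w_C for
   the weight of C and k := w_C - g(-v) (1 - w_C).  Since sigma g(-v) = 1 we
   have k = g(-v) ((1 + sigma) w_C - 1) > 0.  Moving a point x by -t v, with
   0 < t < M, raises each D-term by at most t g(-v) (subadditivity) and lowers
   each C-term by at least t, up to the error g(x - c) + g(c - x): the moved
   points c - M v lie far away in the direction -v, where g(v) = 1.  Hence
     f_M(x - t v) <= f_M(x) - t k + E(x),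
   where E is bounded on the bounded set U because g is dominated by a
   multiple of the norm.  For t larger than (bound of E) / k, moving any x of
   U by -t v strictly decreases f_M, so no minimiser lies in U as soon as
   M > t. *)

Section GaugeProperties.
Variables (R : realType) (d : nat) (B : set 'rV[R]_d).
Hypothesis gaugeB : gauge_body B.

Local Notation g := (gauge_fun B).

Let admissible z := [set t : R | 0 < t /\ exists2 b, B b & z = t *: b].

Lemma origin_ball_in_body :
  exists2 r : R, 0 < r & forall b : 'rV[R]_d, `|b| < r -> B b.
Proof.
case: gaugeB => _ _ /nbhs_ballP [r r0 ballB]; exists r => // b hb.
by apply: ballB; rewrite -ball_normE /ball_ /= sub0r normrN.
Qed.

Lemma admissible_norm r z t : (forall b : 'rV[R]_d, `|b| < r -> B b) ->
  0 < t -> `|z| < t * r -> admissible z t.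
Proof.
move=> ballB t0 hz; split => //=; exists (t^-1 *: z).
  by apply: ballB; rewrite normrZ gtr0_norm ?invr_gt0 // mulrC ltr_pdivrMr // mulrC.
by rewrite scalerA mulfV ?gt_eqF // scale1r.
Qed.

Lemma admissible_neq0 z : admissible z !=set0.
Proof.
have [r r0 ballB] := origin_ball_in_body.
have t0 : 0 < (`|z| + 1) / r by rewrite divr_gt0 // ltr_wpDl.
exists ((`|z| + 1) / r); apply: admissible_norm ballB t0 _.
by rewrite divfK ?gt_eqF // ltrDl.
Qed.

Lemma admissible_lbound z : has_lbound (admissible z).
Proof. by exists 0 => t [/ltW]. Qed.

Lemma gauge_ge0 z : 0 <= g z.
Proof. by apply: lb_le_inf; [exact: admissible_neq0 | move=> t [/ltW]]. Qed.

Lemma gauge_le_admissible z t : admissible z t -> g z <= t.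
Proof. exact: (ge_inf (admissible_lbound z)). Qed.

Lemma gauge_approx z e :
  0 < e -> exists2 t, admissible z t & t < g z + e.
Proof.
by move=> e0; apply: inf_adherent => //; split;
  [exact: admissible_neq0 | exact: admissible_lbound].
Qed.

Lemma gauge_le_norm : exists2 c : R, 0 < c & forall z, g z <= c * `|z|.
Proof.
have [r r0 ballB] := origin_ball_in_body.
exists r^-1; rewrite ?invr_gt0 // => z; apply/ler_addgt0Pr => e e0.
apply: gauge_le_admissible; apply: admissible_norm ballB _ _.
  by rewrite ltr_wpDl // mulr_ge0 // invr_ge0 ltW.
by rewrite mulrDl mulrAC mulVf ?gt_eqF // mul1r ltrDl mulr_gt0.
Qed.

Lemma gauge_scale_le s z : 0 < s -> g (s *: z) <= s * g z.
Proof.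
move=> s0; apply/ler_addgt0Pr => e e0.
have [t [t0 [b Bb ->]] ht] := gauge_approx z (divr_gt0 e0 s0).
apply: (@le_trans _ _ (s * t)).
  by apply: gauge_le_admissible; split; [rewrite mulr_gt0 | exists b => //; rewrite scalerA].
by rewrite -[e](mulVKf (lt0r_neq0 s0)) -mulrDr ler_pM2l // [_^-1 * _]mulrC ltW.
Qed.

Lemma gaugeZ s z : 0 < s -> g (s *: z) = s * g z.
Proof.
move=> s0; apply/eqP; rewrite eq_le gauge_scale_le //=.
have sV0 : 0 < s^-1 by rewrite invr_gt0.
have := gauge_scale_le (s *: z) sV0.
rewrite scalerA mulVf ?lt0r_neq0 // scale1r -(ler_pM2l s0) mulrA.
by rewrite mulfV ?lt0r_neq0 // mul1r.
Qed.

(* Subadditivity, from the convexity of B. *)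
Lemma gauge_add x y : g (x + y) <= g x + g y.
Proof.
apply/ler_addgt0Pr => e e0; have e2 : 0 < e / 2 by rewrite divr_gt0.
have [t1 [t10 [b1 Bb1 ->]] h1] := gauge_approx x e2.
have [t2 [t20 [b2 Bb2 ->]] h2] := gauge_approx y e2.
have t0 : 0 < t1 + t2 by rewrite addr_gt0.
apply: (@le_trans _ _ (t1 + t2)).
  apply: gauge_le_admissible; split => //; exists ((t1 / (t1 + t2)) *: b1 + (1 - t1 / (t1 + t2)) *: b2).
    case: gaugeB => convB _ _; apply: convB => //.
    by rewrite divr_ge0 ?ltW //= ltr_pdivrMr // mul1r ltrDl.
  by apply/rowP => j; rewrite !mxE; field; rewrite gt_eqF.
have := ltrD h1 h2; lra.
Qed.

Lemma gauge_shift z u t : 0 < t -> g (z + t *: u) <= g z + t * g u.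
Proof. by move=> t0; rewrite -gaugeZ //; apply: gauge_add. Qed.

Lemma gauge_pull_back z u t M : g u = 1 -> 0 < t -> t < M ->
  g (z + (M - t) *: u) <= g (z + M *: u) + (g z + g (- z)) - t.
Proof.
move=> gu1 t0 tM; have M0 : 0 < M by apply: lt_trans tM.
have Mt0 : 0 < M - t by rewrite subr_gt0.
have shift := gauge_shift z u Mt0; rewrite gu1 mulr1 in shift.
have far : M <= g (z + M *: u) + g (- z).
  rewrite -{1}[M]mulr1 -gu1 -gaugeZ //.
  by apply: le_trans (gauge_add _ _); rewrite addrC addKr.
lra.
Qed.

End GaugeProperties.

(* Positivity of the descent rate k = w_C - g(-v) (1 - w_C) for v \in SD:
   with gm = g(-v) and sigma gm = 1 it equals gm ((1 + sigma) w_C - 1). *)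
Lemma SD_descent_rate_gt0 (R : realFieldType) (sigma gm wC : R) :
  0 <= gm -> sigma * gm = 1 -> 1 / (1 + sigma) < wC -> 0 < wC - gm * (1 - wC).
Proof.
move=> gm0 sgm wC_gt.
have gm_pos : 0 < gm.
  rewrite lt_neqAle gm0 andbT; apply: contra_eqN sgm => /eqP<-.
  by rewrite mulr0 eq_sym oner_neq0.
have sigma_pos : 0 < sigma by rewrite -(pmulr_lgt0 _ gm_pos) sgm.
have wC1 : 1 < wC * (1 + sigma) by rewrite -ltr_pdivrMr // addr_gt0.
have -> : wC - gm * (1 - wC) = gm * (wC * (1 + sigma) - 1) + wC * (1 - sigma * gm)
  by ring.
by rewrite sgm subrr mulr0 addr0 mulr_gt0 // subr_gt0.
Qed.

Section Descent.
Variables (R : realType) (d n : nat) (B : set 'rV[R]_d).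
Variables (a : 'I_n -> 'rV[R]_d) (w : 'I_n -> R) (C : {set 'I_n}) (v : 'rV[R]_d).
Hypothesis gaugeB : gauge_body B.
Hypothesis w_ge0 : forall i, 0 <= w i.
Hypothesis w_sum1 : \sum_(i < n) w i = 1.

Local Notation g := (gauge_fun B).
Local Notation wC := (\sum_(i < n | i \in C) w i).

(* The error term of the descent estimate, coming from the points of C. *)
Definition spread_C (x : 'rV[R]_d) : R :=
  \sum_(i < n | i \in C) w i * (g (x - a i) + g (a i - x)).

Lemma fM_descent M t x : g v = 1 -> 0 < t -> t < M ->
  fM g a w C v M (x - t *: v)
    <= fM g a w C v M x - t * (wC - g (- v) * (1 - wC)) + spread_C x.
Proof.
move=> gv1 t0 tM; rewrite /fM /spread_C.
have wD : \sum_(i < n | i \notin C) w i = 1 - wC.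
  by rewrite -w_sum1 [in RHS](bigID (mem C)) /= addrAC subrr add0r.
have moveD : \sum_(i < n | i \notin C) w i * g (x - t *: v - a i)
    <= \sum_(i < n | i \notin C) w i * g (x - a i) + (1 - wC) * (t * g (- v)).
  rewrite -wD big_distrl -big_split /=; apply: ler_sum => i _.
  rewrite -mulrDr ler_wpM2l // addrAC -scalerN.
  exact: gauge_shift.
have moveC : \sum_(i < n | i \in C) w i * g (x - t *: v - (a i - M *: v))
    <= \sum_(i < n | i \in C) w i * g (x - (a i - M *: v))
       + \sum_(i < n | i \in C) w i * (g (x - a i) + g (a i - x)) - wC * t.
  rewrite big_distrl -!big_split -sumrB /=; apply: ler_sum => i _.
  rewrite -mulrDr -mulrBr ler_wpM2l //.
  have moved : x - t *: v - (a i - M *: v) = x - a i + (M - t) *: v.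
    by apply/rowP => j; rewrite !mxE; ring.
  have far : x - (a i - M *: v) = x - a i + M *: v.
    by apply/rowP => j; rewrite !mxE; ring.
  rewrite moved far -[a i - x]opprB.
  exact: gauge_pull_back.
have := lerD moveD moveC; lra.
Qed.

Lemma spread_C_bounded (U : set 'rV[R]_d) : bounded_set U ->
  exists K : R, forall x, U x -> spread_C x <= K.
Proof.
case=> m [_ Um]; have [c c0 gc] := gauge_le_norm gaugeB.
exists (\sum_(i < n | i \in C) w i * (2 * c * (`|m + 1| + `|a i|))) => x Ux.
have xm : `|x| <= `|m + 1| by apply: le_trans (ler_norm _); apply: Um => //; lra.
apply: ler_sum => i _; rewrite ler_wpM2l //.
have dist : `|x - a i| <= `|m + 1| + `|a i|.
  by apply: le_trans (ler_normB _ _) _; rewrite lerD2r.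
have := gc (x - a i); have := gc (a i - x); rewrite -opprB normrN.
have := ler_wpM2l (ltW c0) dist; lra.
Qed.

End Descent.

Theorem mainTheorem4 (R : realType) (d n : nat) (B : set 'rV[R]_d)
  (a : 'I_n -> 'rV[R]_d) (w : 'I_n -> R) (C : {set 'I_n})
  (v : 'rV[R]_d) (U : set 'rV[R]_d) :
  gauge_body B ->
  SD (gauge_fun B) v ->
  injective a ->
  (forall i, 0 < w i) ->
  \sum_(i < n) w i = 1 ->
  \sum_(i < n | i \in C) w i > 1 / (1 + skewness (gauge_fun B)) ->
  bounded_set U ->
  exists2 M0 : R, 0 < M0 &
    forall M : R, M > M0 ->
    forall x : 'rV[R]_d,
      (forall y, fM (gauge_fun B) a w C v M x <= fM (gauge_fun B) a w C v M y) ->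
      ~ U x.
Proof.
move=> gaugeB [gv1 sgm1] _ w_gt0 w_sum1 wC_gt boundedU.
have w_ge0 i : 0 <= w i by exact: ltW.
set wC := \sum_(i < n | i \in C) w i in wC_gt *.
set k := wC - gauge_fun B (- v) * (1 - wC).
have k_gt0 : 0 < k := SD_descent_rate_gt0 (gauge_ge0 gaugeB _) sgm1 wC_gt.
have [K spreadK] := spread_C_bounded a C gaugeB w_ge0 boundedU.
(* Moving by -M0 v decreases f_M by at least M0 k - K > 0 on U. *)
exists ((`|K| + 1) / k); first by rewrite divr_gt0 // ltr_wpDl.
move=> M M0M x x_min Ux.
have descent := fM_descent a C gaugeB w_ge0 w_sum1 x gv1
  (divr_gt0 (ltr_wpDl (normr_ge0 K) ltr01) k_gt0) M0M.
rewrite -/k divfK ?gt_eqF // in descent.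
have := x_min (x - (`|K| + 1) / k *: v); have := spreadK x Ux.
have := ler_norm K; lra.
Qed.
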